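(* A finite Boolean inverse monoid is fundamental if and only if its groupoid of atoms is principal.
   Context: An inverse semigroup is a semigroup in which each $s$ has a unique $s^{-1}$ with $s=ss^{-1}s$, $s^{-1}=s^{-1}ss^{-1}$; natural partial order $s\le t$ iff $s=ts^{-1}s$; $a,b$ are compatible if $a^{-1}b,ab^{-1}$ are idempotents. A Boolean inverse monoid is an inverse monoid with zero in which finite compatible subsets have joins with respect to $\le$, multiplication distributes over them, and the idempotents form a Boolean algebra. An inverse semigroup $S$ is fundamental if every element commuting with all idempotents of $S$ is itself an idempotent. An atom is a non-zero element $s$ with $t\le s\Rightarrow t\in\{0,s\}$; the atoms form a groupoid under the restricted product $x\cdot y=xy$, defined when $x^{-1}x=yy^{-1}$. A groupoid is principal if for any identities $e,f$ there is at most one arrow from $e$ to $f$. *)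

From mathcomp Require Import all_boot.
Set Implicit Arguments. Unset Strict Implicit. Unset Printing Implicit Defensive.

Section InverseMonoid.
Variables (T : finType) (mul : T -> T -> T) (inv : T -> T) (one zero : T).

Definition inverse_semigroup : Prop :=
  (forall a b c, mul a (mul b c) = mul (mul a b) c) /\
  (forall s, s = mul s (mul (inv s) s) /\ inv s = mul (inv s) (mul s (inv s))) /\
  (forall s t, s = mul s (mul t s) -> t = mul t (mul s t) -> t = inv s).

Definition idempotent (e : T) : Prop := mul e e = e.

Definition nle (s t : T) : Prop := s = mul t (mul (inv s) s).

Definition compatible (a b : T) : Prop :=
  idempotent (mul (inv a) b) /\ idempotent (mul a (inv b)).

Definition compatible_set (A : {set T}) : Prop :=
  forall a b, a \in A -> b \in A -> compatible a b.

Definition is_join (A : {set T}) (x : T) : Prop :=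
  (forall a, a \in A -> nle a x) /\
  (forall y, (forall a, a \in A -> nle a y) -> nle x y).

Definition idem_lub (e f j : T) : Prop :=
  idempotent j /\ nle e j /\ nle f j /\
  (forall g, idempotent g -> nle e g -> nle f g -> nle j g).
Definition idem_glb (e f m : T) : Prop :=
  idempotent m /\ nle m e /\ nle m f /\
  (forall g, idempotent g -> nle g e -> nle g f -> nle g m).

Definition idempotents_boolean : Prop :=
  (forall e, idempotent e -> nle zero e /\ nle e one) /\
  exists (join meet : T -> T -> T) (compl : T -> T),
    (forall e f, idempotent e -> idempotent f ->
       idem_lub e f (join e f) /\ idem_glb e f (meet e f)) /\
    (forall e f g, idempotent e -> idempotent f -> idempotent g ->
       meet e (join f g) = join (meet e f) (meet e g)) /\
    (forall e, idempotent e ->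
       idempotent (compl e) /\ meet e (compl e) = zero /\ join e (compl e) = one).

Definition boolean_inverse_monoid : Prop :=
  inverse_semigroup /\
  (forall s, mul one s = s /\ mul s one = s) /\
  (forall s, mul zero s = zero /\ mul s zero = zero) /\
  (forall A : {set T}, compatible_set A -> exists x, is_join A x) /\
  (forall (A : {set T}) x s, compatible_set A -> is_join A x ->
     is_join (mul s @: A) (mul s x) /\ is_join ((fun a => mul a s) @: A) (mul x s)) /\
  idempotents_boolean.

Definition fundamental : Prop :=
  forall s, (forall e, idempotent e -> mul s e = mul e s) -> idempotent s.

Definition atom (s : T) : Prop :=
  s <> zero /\ forall t, nle t s -> t = zero \/ t = s.

(* Groupoid of atoms: arrows are atoms x, with domain inv x * x and range
   x * inv x; identities are the idempotent atoms.  Principal: for any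
   identities e f there is at most one arrow from e to f. *)
Definition atom_arrow (e f x : T) : Prop :=
  atom x /\ mul (inv x) x = e /\ mul x (inv x) = f.

Definition atom_groupoid_principal : Prop :=
  forall e f, atom e -> idempotent e -> atom f -> idempotent f ->
    forall x y, atom_arrow e f x -> atom_arrow e f y -> x = y.

End InverseMonoid.

From Pilot Require Import Defs.
From mathcomp Require Import all_boot.
Set Implicit Arguments. Unset Strict Implicit. Unset Printing Implicit Defensive.

(* If [x] and [y] are arrows [e -> f] of the atom groupoid, then [g = inv x ** y] lies
   in the local group at the idempotent atom [e]. Joined with the complement of [e],
   [g] becomes an element centralizing all idempotents, so in a fundamental monoid it
   is idempotent, forcing [g = e] and [x = y]. Conversely, if the groupoid is
   principal, an atom [a] below an element [s] centralizing the idempotents has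
   [a ** inv a = inv a ** a], so [a] is an arrow parallel to an identity, hence
   idempotent. By finiteness every nonzero element lies above an atom, so [s] vanishes
   on the complement of the join [j] of the idempotents below [s], and [s = s ** j = j]. *)

Section InverseSemigroup.
Variables (T : finType) (mul : T -> T -> T) (inv : T -> T).
Local Notation "x ** y" := (mul x y) (at level 40, left associativity).
Local Notation idem e := (e ** e = e).
Local Notation le s t := (nle mul inv s t).

Hypothesis mulA : associative mul.
Hypothesis inv_axiom :
  forall s, s = s ** (inv s ** s) /\ inv s = inv s ** (s ** inv s).
Hypothesis inv_unique :
  forall s t, s = s ** (t ** s) -> t = t ** (s ** t) -> t = inv s.

Lemma mulVmul s : s ** inv s ** s = s.
Proof. by rewrite -mulA -(inv_axiom s).1. Qed.

Lemma Vmulmul s : inv s ** s ** inv s = inv s.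
Proof. by rewrite -mulA -(inv_axiom s).2. Qed.

Lemma mulVmulA a s : a ** s ** inv s ** s = a ** s.
Proof. by rewrite -(mulA _ (inv s)) -mulA -(inv_axiom s).1. Qed.

Lemma VmulmulA a s : a ** inv s ** s ** inv s = a ** inv s.
Proof. by rewrite -(mulA _ s) -mulA -(inv_axiom s).2. Qed.

Lemma invK : involutive inv.
Proof. by move=> s; symmetry; apply: inv_unique; rewrite mulA ?mulVmul ?Vmulmul. Qed.

Lemma inv_idem e : idem e -> inv e = e.
Proof. by move=> He; symmetry; apply: inv_unique; rewrite !He. Qed.

Lemma idem_mulV s : idem (s ** inv s).
Proof. by rewrite mulA mulVmul. Qed.

Lemma idem_Vmul s : idem (inv s ** s).
Proof. by rewrite mulA Vmulmul. Qed.

Lemma mul_idemK a e : idem e -> a ** e ** e = a ** e.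
Proof. by move=> He; rewrite -mulA He. Qed.

(* The inverse [x] of [e ** f] satisfies [x = f ** x ** e], which makes it idempotent. *)
Lemma idem_mul e f : idem e -> idem f -> idem (e ** f).
Proof.
move=> He Hf; set x := inv (e ** f).
have efxef : e ** f ** x ** e ** f = e ** f by rewrite -mulA mulVmul.
have xefx a : a ** x ** e ** f ** x = a ** x by rewrite -(mulA _ e f) VmulmulA.
have fxe : f ** x ** e = x.
  apply: inv_unique; rewrite !mulA.
    by rewrite (mul_idemK _ Hf) (mul_idemK _ He) efxef.
  by rewrite (mul_idemK _ He) (mul_idemK _ Hf) xefx.
have Ix : idem x by rewrite -{1}fxe -{2}fxe !mulA xefx fxe.
by have := inv_idem Ix; rewrite /x invK => ->.
Qed.

Lemma idem_comm e f : idem e -> idem f -> e ** f = f ** e.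
Proof.
move=> He Hf; have Hef := idem_mul He Hf; have Hfe := idem_mul Hf He.
rewrite -(inv_idem Hef); symmetry; apply: inv_unique.
  by rewrite !mulA (mul_idemK _ Hf) (mul_idemK _ He) -mulA Hef.
by rewrite !mulA (mul_idemK _ He) (mul_idemK _ Hf) -mulA Hfe.
Qed.

Lemma invM s t : inv (s ** t) = inv t ** inv s.
Proof.
have C a : a ** (t ** inv t) ** (inv s ** s) = a ** (inv s ** s) ** (t ** inv t).
  by rewrite -mulA (idem_comm (idem_mulV t) (idem_Vmul s)) mulA.
symmetry; apply: inv_unique.
  have -> : s ** t ** (inv t ** inv s ** (s ** t))
            = s ** (t ** inv t) ** (inv s ** s) ** t by rewrite !mulA.
  by rewrite C !mulA mulVmul mulVmulA.
have -> : inv t ** inv s ** (s ** t ** (inv t ** inv s))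
          = inv t ** (inv s ** s) ** (t ** inv t) ** inv s by rewrite !mulA.
by rewrite -C !mulA Vmulmul VmulmulA.
Qed.

Lemma nle_refl s : le s s.
Proof. exact: (inv_axiom s).1. Qed.

Lemma nle_mul_idem t e : idem e -> le (t ** e) t.
Proof.
move=> He; rewrite /nle invM (inv_idem He).
have -> : t ** (e ** inv t ** (t ** e)) = t ** (e ** (inv t ** t)) ** e by rewrite !mulA.
by rewrite (idem_comm He (idem_Vmul t)) !mulA mulVmul mul_idemK.
Qed.

Lemma nle_trans r s t : le r s -> le s t -> le r t.
Proof.
move=> Hr Hs; have -> : r = t ** (inv s ** s ** (inv r ** r)) by rewrite mulA -Hs -Hr.
by apply: nle_mul_idem; apply: idem_mul; apply: idem_Vmul.
Qed.

Lemma nle_anti s t : le s t -> le t s -> s = t.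
Proof.
move=> Hs Ht; rewrite /nle in Hs Ht.
have E : s = s ** (inv t ** t) ** (inv s ** s) by rewrite -Ht.
by rewrite -mulA (idem_comm (idem_Vmul t) (idem_Vmul s)) mulA -(inv_axiom s).1 -Ht in E.
Qed.

Lemma nle_idem_idem a e : idem e -> le a e -> idem a.
Proof. by move=> He ->; apply: idem_mul => //; apply: idem_Vmul. Qed.

Lemma nle_idemE a e : idem a -> le a e -> a = e ** a.
Proof. by move=> Ha Hle; rewrite {1}Hle (inv_idem Ha) Ha. Qed.

Lemma join_unique A x y : is_join mul inv A x -> is_join mul inv A y -> x = y.
Proof. by move=> [Jx1 Jx2] [Jy1 Jy2]; apply: nle_anti; [apply: Jx2 | apply: Jy2]. Qed.

Lemma idem_glb_unique e f m1 m2 :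
  idem_glb mul inv e f m1 -> idem_glb mul inv e f m2 -> m1 = m2.
Proof.
by move=> [I1 [L1 [R1 G1]]] [I2 [L2 [R2 G2]]]; apply: nle_anti; [apply: G2 | apply: G1].
Qed.

Lemma idem_lub_unique e f m1 m2 :
  idem_lub mul inv e f m1 -> idem_lub mul inv e f m2 -> m1 = m2.
Proof.
by move=> [I1 [L1 [R1 G1]]] [I2 [L2 [R2 G2]]]; apply: nle_anti; [apply: G1 | apply: G2].
Qed.

Lemma idem_glb_mul e f : idem e -> idem f -> idem_glb mul inv e f (e ** f).
Proof.
move=> He Hf; split; first exact: idem_mul.
split; first exact: nle_mul_idem.
split; first by rewrite (idem_comm He Hf); apply: nle_mul_idem.
move=> g Hg Hge Hgf; rewrite /nle (inv_idem Hg) Hg -mulA -(nle_idemE Hg Hgf).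
exact: nle_idemE.
Qed.

Lemma compatible_refl a : compatible mul inv a a.
Proof. by split; [apply: idem_Vmul | apply: idem_mulV]. Qed.

Lemma compatible_sym a b : compatible mul inv a b -> compatible mul inv b a.
Proof.
have idemV x : idem x -> idem (inv x) by move=> Ix; rewrite (inv_idem Ix).
by move=> [Hab Hab']; split; [move: (idemV _ Hab) | move: (idemV _ Hab')];
  rewrite invM invK.
Qed.

Lemma compatible_set2 a b :
  compatible mul inv a b -> compatible_set mul inv [set a; b].
Proof.
move=> Hab x y /set2P[]-> /set2P[]->;
  by [apply: compatible_refl | | apply: compatible_sym].
Qed.

Lemma compatible_idem a b : idem a -> idem b -> compatible mul inv a b.
Proof.
move=> Ia Ib.
by split; rewrite /Defs.idempotent ?(inv_idem Ia) ?(inv_idem Ib); apply: idem_mul.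
Qed.

Definition idem_central s : Prop := forall e, idem e -> s ** e = e ** s.

Lemma nle_central a s : idem_central s -> le a s -> idem_central a.
Proof.
move=> Cs -> e Ie.
by rewrite -mulA (idem_comm (idem_Vmul a) Ie) mulA (Cs _ Ie) -mulA.
Qed.

Lemma central_mulV a : idem_central a -> a ** inv a = inv a ** a.
Proof.
move=> Ca.
have E1 : a ** inv a = inv a ** a ** (a ** inv a).
  by rewrite mulA -(Ca _ (idem_Vmul a)) mulA mulVmul.
have E2 : inv a ** a = inv a ** a ** (a ** inv a).
  by rewrite -mulA (Ca _ (idem_mulV a)) mulVmul.
by rewrite {1}E1 -E2.
Qed.

Section Zero.
Variable zero : T.
Hypothesis mul0l : left_zero zero mul.
Hypothesis mul0r : right_zero zero mul.
Local Notation atom := (atom mul inv zero).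

Lemma zero_nle a : le zero a.
Proof. by rewrite /nle !mul0r. Qed.

Definition below s : {set T} := [set t | t == s ** (inv t ** t)].

Lemma belowP s t : reflect (le t s) (t \in below s).
Proof. by rewrite inE; apply: eqP. Qed.

Lemma below_proper s t : le t s -> t <> s -> below t \proper below s.
Proof.
move=> ts nts; apply/properP; split.
  by apply/subsetP => r /belowP rt; apply/belowP; apply: nle_trans ts.
by exists s; apply/belowP; [apply: nle_refl | move=> st; apply: nts; apply: nle_anti].
Qed.

(* A nonzero element with the fewest elements below it is an atom. *)
Lemma exists_atom_below u : u <> zero -> exists2 b, atom b & le b u.
Proof.
move=> u0; pose P t := (t != zero) && (t \in below u).
have Pu : P u by apply/andP; split; [apply/eqP | apply/belowP; apply: nle_refl].
case: (arg_minnP (fun t => #|below t|) Pu) => b /andP[/eqP b0 /belowP bu] bmin.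
exists b => //; split=> // t tb.
case: (eqVneq t zero) => [|t0]; [by left | right].
case: (eqVneq t b) => // /eqP ntb.
have Pt : P t by rewrite /P t0; apply/belowP; apply: nle_trans bu.
by move: (bmin t Pt); rewrite leqNgt (proper_card (below_proper tb ntb)).
Qed.

Lemma atom_mul_idem a e : atom a -> idem e -> a ** e = zero \/ a ** e = a.
Proof. by move=> Aa Ie; apply: Aa.2; apply: nle_mul_idem. Qed.

Lemma atom_Vmul a : atom a -> atom (inv a ** a).
Proof.
move=> Aa; split=> [d0 | t Ht].
  by apply: Aa.1; rewrite -(mulVmul a) -mulA d0 mul0r.
have It : idem t := nle_idem_idem (idem_Vmul a) Ht.
have tE := nle_idemE It Ht.
case: (atom_mul_idem Aa It) => E; [left | right].
  by rewrite tE -mulA E mul0r.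
by rewrite tE -mulA E.
Qed.

Lemma local_atom_central e g :
  atom e -> idem e -> e ** g = g -> g ** e = g -> idem_central g.
Proof.
move=> Ae Ie eg ge f If.
rewrite -{1}ge -{2}eg -mulA [f ** _]mulA (idem_comm If Ie).
by case: (atom_mul_idem Ae If) => ->; rewrite ?mul0l ?mul0r // ?ge ?eg.
Qed.

Lemma central_atom_idem a :
  atom_groupoid_principal mul inv zero -> idem_central a -> atom a -> idem a.
Proof.
move=> Hp Ca Aa; set d := inv a ** a.
have Ad : atom d := atom_Vmul Aa.
have Id : idem d := idem_Vmul a.
have dd : inv d ** d = d /\ d ** inv d = d by rewrite (inv_idem Id) Id.
by rewrite (Hp d d Ad Id Ad Id a d (conj Aa (conj erefl (central_mulV Ca))) (conj Ad dd)).
Qed.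

Section Boolean.
Variable one : T.
Hypothesis mul1l : left_id one mul.
Hypothesis mul1r : right_id one mul.
Hypothesis join_exists : forall A : {set T},
  compatible_set mul inv A -> exists x, is_join mul inv A x.
Hypothesis join_mul : forall (A : {set T}) x s,
  compatible_set mul inv A -> is_join mul inv A x ->
  is_join mul inv (mul s @: A) (s ** x) /\
  is_join mul inv ((fun a => a ** s) @: A) (x ** s).
Hypothesis idem_boolean : idempotents_boolean mul inv one zero.

Lemma idem_nle1 e : idem e -> le e one.
Proof. by move=> Ie; rewrite /nle mul1l (inv_idem Ie) Ie. Qed.

Lemma join_idem (A : {set T}) x :
  (forall a, a \in A -> idem a) -> is_join mul inv A x -> idem x.
Proof.
move=> IA Hx; apply: nle_idem_idem (mul1l one) _.
by apply: Hx.2 => a /IA; apply: idem_nle1.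
Qed.

Lemma idem_complement e :
  idem e -> exists2 c, idem c & e ** c = zero /\ is_join mul inv [set e; c] one.
Proof.
move=> Ie; have [_ [join [meet [compl [Hjm [_ Hc]]]]]] := idem_boolean.
have [Ic [Mc Jc]] := Hc e Ie; have [Jec Mec] := Hjm _ _ Ie Ic.
exists (compl e) => //; split.
  by rewrite -Mc; apply: idem_glb_unique (idem_glb_mul Ie Ic) Mec.
have [x Hx] := join_exists (compatible_set2 (compatible_idem Ie Ic)).
suff <- : x = one by [].
rewrite -Jc; apply: idem_lub_unique Jec; split.
  by apply: join_idem Hx => a /set2P[]->.
split; first exact: Hx.1 (set21 _ _).
split; first exact: Hx.1 (set22 _ _).
by move=> g _ Heg Hcg; apply: Hx.2 => a /set2P[]->.
Qed.

Lemma join_central (A : {set T}) t : compatible_set mul inv A -> is_join mul inv A t ->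
  (forall a, a \in A -> idem_central a) -> idem_central t.
Proof.
move=> HA Ht CA e Ie; have [Hl Hr] := join_mul e HA Ht.
apply: join_unique Hr _; suff -> : (fun a => a ** e) @: A = mul e @: A by [].
by apply: eq_in_imset => a /CA; apply.
Qed.

Lemma eq_mul_of_mul_compl0 e c s : idem e -> idem c -> is_join mul inv [set e; c] one ->
  s ** c = zero -> s = s ** e.
Proof.
move=> Ie Ic Hj sc; have [Hs _] := join_mul s (compatible_set2 (compatible_idem Ie Ic)) Hj.
rewrite mul1r imsetU1 imset_set1 sc in Hs; apply: join_unique Hs _.
split=> [a /set2P[]-> | y Hy];
  [apply: nle_refl | apply: zero_nle | apply: Hy; apply: set21].
Qed.

Lemma fundamental_principal :
  fundamental mul -> atom_groupoid_principal mul inv zero.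
Proof.
move=> Hf e f Ae Ie _ _ x y [_ [dx rx]] [_ [dy ry]]; set g := inv x ** y.
have Vgg : inv g ** g = e.
  by rewrite invM invK !mulA -(mulA _ x) rx -ry mulA Vmulmul dy.
have gVg : g ** inv g = e.
  by rewrite invM invK !mulA -(mulA _ y) ry -rx mulA Vmulmul dx.
have eg : e ** g = g by rewrite -gVg mulVmul.
have ge : g ** e = g by rewrite -Vgg mulA mulVmul.
have [c Ic [ec _]] := idem_complement Ie.
have gc : g ** c = zero by rewrite -ge -mulA ec mul0r.
have Vgc : inv g ** c = zero by rewrite -eg invM (inv_idem Ie) -mulA ec mul0r.
have Hgc : compatible_set mul inv [set g; c].
  by apply: compatible_set2; split; rewrite /Defs.idempotent ?(inv_idem Ic) ?gc ?Vgc mul0l.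
have [t Ht] := join_exists Hgc.
have Ct : idem_central t.
  apply: join_central Hgc Ht _ => a /set2P[]->; first exact: local_atom_central Ae Ie eg ge.
  by move=> h Ih; apply: idem_comm.
have Ig : idem g := nle_idem_idem (Hf t Ct) (Ht.1 g (set21 g c)).
have gE : g = e by rewrite -Vgg (inv_idem Ig) Ig.
by rewrite -(mulVmul x) -mulA dx -gE /g mulA rx -ry mulVmul.
Qed.

Lemma principal_fundamental :
  atom_groupoid_principal mul inv zero -> fundamental mul.
Proof.
move=> Hp s Cs; pose A := [set a | (a ** a == a) && (a \in below s)].
have IA a : a \in A -> idem a by rewrite inE => /andP[/eqP].
have [j Hj] := join_exists (fun a b Ha Hb => compatible_idem (IA a Ha) (IA b Hb)).
have Ij : idem j := join_idem IA Hj.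
have js : j = s ** j.
  have : le j s by apply: Hj.2 => a; rewrite inE => /andP[_ /belowP].
  by rewrite /nle (inv_idem Ij) Ij.
have [c Ic [jc Hjc]] := idem_complement Ij.
have sc : s ** c = zero.
  case: (eqVneq (s ** c) zero) => // /eqP /exists_atom_below[b Ab bsc].
  have bs : le b s := nle_trans bsc (nle_mul_idem s Ic).
  have Ib : idem b := central_atom_idem Hp (nle_central Cs bs) Ab.
  have bA : b \in A by rewrite inE Ib eqxx; apply/belowP.
  have bj : b = j ** b := nle_idemE Ib (Hj.1 b bA).
  case: Ab => + _; rewrite bsc (inv_idem Ib) Ib bj !mulA -(mulA s).
  by rewrite (idem_comm Ic Ij) jc mul0r mul0l.
by rewrite (eq_mul_of_mul_compl0 Ij Ic Hjc sc) -js.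
Qed.

End Boolean.
End Zero.
End InverseSemigroup.

Theorem mainTheorem4 (T : finType) (mul : T -> T -> T) (inv : T -> T) (one zero : T)
  (H : boolean_inverse_monoid mul inv one zero) :
  fundamental mul <-> atom_groupoid_principal mul inv zero.
Proof.
have [[mulA [inv_axiom inv_unique]] [mul1 [mul0 [join_exists [join_mul idem_boolean]]]]]
  := H.
have mul0l : left_zero zero mul by move=> s; case: (mul0 s).
have mul0r : right_zero zero mul by move=> s; case: (mul0 s).
have mul1l : left_id one mul by move=> s; case: (mul1 s).
have mul1r : right_id one mul by move=> s; case: (mul1 s).
split.
  exact (fundamental_principal mulA inv_axiom inv_unique mul0l mul0r mul1l
    join_exists join_mul idem_boolean).
exact (principal_fundamental mulA inv_axiom inv_unique mul0l mul0r mul1l mul1r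
  join_exists join_mul idem_boolean).
Qed.
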